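(* Let $n\ge 5$ and $x\in S_n$. Then $x\in\mathrm{Sort}_n(123,321)$ if and only if $\mathrm{inc}_{n+1}(x)\in\mathrm{Sort}_{n+1}(123,321)$.
   Context: For $x=x_1\cdots x_n\in S_n$, $\mathrm{inc}_{n+1}(x)=(x_1+1)(x_2+1)\cdots(x_n+1)\,1\in S_{n+1}$ (insert $1$ at the end and increase all other entries by one). A permutation contains a pattern $p$ if it has a subsequence order-isomorphic to $p$; otherwise it avoids $p$. For a set $T$ of patterns, the map $s_T$ is defined as follows: the entries of the input permutation are read from left to right, with an initially empty stack. At each step, if the input is nonempty and pushing the next input entry onto the stack produces a stack whose contents, read from top to bottom, avoid every pattern in $T$, that entry is pushed; otherwise the top entry of the stack is popped and appended to the output. When the input is exhausted, the remaining stack entries are popped one at a time to the output. Write $s_{\sigma,\tau}=s_{\{\sigma,\tau\}}$ and $s=s_{\{21\}}$ (West's stack-sorting map). $\mathrm{Sort}_n(\sigma,\tau)$ is the set of $x\in S_n$ with $s(s_{\sigma,\tau}(x))=12\cdots n$. *)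

From mathcomp Require Import all_boot.
Set Implicit Arguments. Unset Strict Implicit. Unset Printing Implicit Defensive.

(* Permutations of S_n are represented as sequences of naturals that are a
   rearrangement of 1..n (one-line notation). *)
Definition is_perm (n : nat) (x : seq nat) : bool := perm_eq x (iota 1 n).

Definition inc (x : seq nat) : seq nat := rcons (map succn x) 1.

Definition order_iso (s p : seq nat) : bool :=
  (size s == size p) &&
  all (fun i => all (fun j =>
     (nth 0 s i < nth 0 s j) == (nth 0 p i < nth 0 p j))
     (iota 0 (size s))) (iota 0 (size s)).

Fixpoint subseqs (s : seq nat) : seq (seq nat) :=
  if s is a :: s' then
    let r := subseqs s' in [seq a :: t | t <- r] ++ r
  else [:: [::]].

Definition contains (w p : seq nat) : bool :=
  has (fun t => order_iso t p) (subseqs w).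

Definition avoids_all (T : seq (seq nat)) (w : seq nat) : bool :=
  all (fun p => ~~ contains w p) T.

(* One step of the pattern-avoiding stack machine.  The stack is a list whose
   head is the top, so the list itself reads the contents top to bottom.
   State: (input, stack, output). *)
Definition stack_step (T : seq (seq nat)) (st : seq nat * seq nat * seq nat)
  : seq nat * seq nat * seq nat :=
  let: (inp, stk, out) := st in
  match inp with
  | a :: inp' =>
      if avoids_all T (a :: stk) then (inp', a :: stk, out)
      else match stk with
           | b :: stk' => (inp, stk', rcons out b)
           | [::] => (inp', [:: a], out) (* never happens for patterns of length >= 2 *)
           end
  | [::] =>
      match stk with
      | b :: stk' => (inp, stk', rcons out b)
      | [::] => st
      end
  end.

Fixpoint stack_run (T : seq (seq nat)) (fuel : nat) st :=
  if fuel is k.+1 then stack_run T k (stack_step T st) else st.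

(* s_T(x): each entry is pushed once and popped once, so 2|x| steps suffice. *)
Definition s_T (T : seq (seq nat)) (x : seq nat) : seq nat :=
  (stack_run T (2 * size x) (x, [::], [::])).2.

Definition s_pair (sigma tau : seq nat) := s_T [:: sigma; tau].

Definition west_s := s_T [:: [:: 2; 1]].

Definition in_Sort (n : nat) (sigma tau : seq nat) (x : seq nat) : bool :=
  is_perm n x && (west_s (s_pair sigma tau x) == iota 1 n).

(* Write x' for map succn x, so that inc x = x' ++ [:: 1].  Reading x', the
   (123,321)-machine reaches a stack S and an output O; the last entry 1 then pops
   a prefix P of S = P ++ S2 and stays, so s_{123,321}(inc x) = O ++ P ++ 1 :: S2
   while s_{123,321}(x') = O ++ P ++ S2.  If O ++ P is decreasing, West's map
   sends 1 straight to the front and both sides are sorted or not together.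
   Otherwise O ++ P has an ascent b < c, so b c 1 is a 231 and s(inc x) is not
   sorted; and O ++ P ++ S2 contains a 231 too: the minimum of x' either left the
   stack during the reading, which already outputs a 231, or it stays in S, and
   then it is the last entry of P or lies in S2, since an ascent below it on the
   stack would complete a 123. *)

From mathcomp Require Import all_boot zify.
Set Implicit Arguments. Unset Strict Implicit. Unset Printing Implicit Defensive.

Definition state := (seq nat * seq nat * seq nat)%type.

Definition pending (st : state) := 2 * size st.1.1 + size st.1.2.

Definition run_out T (st : state) := (stack_run T (pending st) st).2.

Definition content (st : state) := st.2 ++ st.1.2 ++ st.1.1.

Variant stack_step_spec T : state -> state -> Prop :=
  | StepPush a i s o of (s == [::]) || avoids_all T (a :: s) :
      stack_step_spec T (a :: i, s, o) (i, a :: s, o)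
  | StepPop i b s o of (i == [::]) || ~~ avoids_all T (head 0 i :: b :: s) :
      stack_step_spec T (i, b :: s, o) (i, s, rcons o b)
  | StepIdle o : stack_step_spec T ([::], [::], o) ([::], [::], o).

Lemma stack_stepP T st : stack_step_spec T st (stack_step T st).
Proof.
case: st => [[[|a i] [|b s]] o] /=; try by constructor.
- by case: ifP => _; constructor.
- by case: ifP => av; constructor; rewrite ?av.
Qed.

Lemma stack_step_push T a i s o :
  avoids_all T (a :: s) -> stack_step T (a :: i, s, o) = (i, a :: s, o).
Proof. by case: s => [|b s] /= ->. Qed.

Lemma stack_step_pop T a i b s o :
  ~~ avoids_all T [:: a, b & s] -> stack_step T (a :: i, b :: s, o) = (a :: i, s, rcons o b).
Proof. by move=> /negbTE /= ->. Qed.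

Lemma pending_step T st : pending (stack_step T st) = (pending st).-1.
Proof. by case: stack_stepP => *; rewrite /pending /=; lia. Qed.

Lemma pending_stack_run T k st : pending (stack_run T k st) = pending st - k.
Proof. by elim: k st => [|k IH] st /=; rewrite ?subn0 // IH pending_step; lia. Qed.

Lemma pending0 st : pending st = 0 -> st = ([::], [::], st.2).
Proof. by case: st => [[[|a i] [|b s]] o] //; rewrite /pending /=; lia. Qed.

Lemma stack_run_final T st : stack_run T (pending st) st = ([::], [::], run_out T st).
Proof. by rewrite [LHS]pending0 // pending_stack_run subnn. Qed.

Lemma run_out_step T st : run_out T (stack_step T st) = run_out T st.
Proof.
rewrite /run_out pending_step; case E: (pending st) => [|k] //.
by rewrite [in RHS](pending0 E) [in LHS](pending0 E).
Qed.

Lemma run_out_flush T s o : run_out T ([::], s, o) = o ++ s.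
Proof.
elim: s o => [|b s IH] o; first by rewrite cats0.
by rewrite -run_out_step /= IH cat_rcons.
Qed.

Lemma run_out_ind T (Q : state -> Prop) :
  (forall st, Q st -> Q (stack_step T st)) ->
  forall st, Q st -> Q ([::], [::], run_out T st).
Proof.
move=> QS st; rewrite -stack_run_final.
move: (pending st) => k; elim: k st => [|k IH] st Qst //=; exact/IH/QS.
Qed.

Lemma perm_content_step T st : perm_eq (content (stack_step T st)) (content st).
Proof.
case: stack_stepP => [a i s o _|i b s o _|o] //; rewrite /content /= ?cat_rcons //.
by rewrite perm_cat2l -cat1s perm_catCA.
Qed.

Lemma perm_run_out T st : perm_eq (run_out T st) (content st).
Proof.
rewrite -[run_out T st]cats0 -[_ ++ [::]]/(content ([::], [::], run_out T st)).
apply: (run_out_ind (Q := fun st' => perm_eq (content st') (content st))) => // st'.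
exact/perm_trans/perm_content_step.
Qed.

Lemma stack_run_comm T (g : state -> state) :
  (forall st, stack_step T (g st) = g (stack_step T st)) ->
  forall k st, stack_run T k (g st) = g (stack_run T k st).
Proof. by move=> gE; elim=> [|k IH] st //=; rewrite gE IH. Qed.

Lemma run_out_cat T i s o1 o2 :
  run_out T (i, s, o1 ++ o2) = o1 ++ run_out T (i, s, o2).
Proof.
pose g (st : state) : state := (st.1.1, st.1.2, o1 ++ st.2).
have gE st : stack_step T (g st) = g (stack_step T st).
  by case: st => [[[|a i'] [|b s']] o] /=; rewrite ?rcons_cat //; case: ifP; rewrite /= ?rcons_cat.
by rewrite /run_out (stack_run_comm gE _ (i, s, o2)).
Qed.

Lemma stack_step_catl T i s o z : i != [::] ->
  stack_step T (i ++ z, s, o) =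
  ((stack_step T (i, s, o)).1.1 ++ z, (stack_step T (i, s, o)).1.2, (stack_step T (i, s, o)).2).
Proof. by case: i => [|a i] // _; case: s => [|b s] /=; case: ifP. Qed.

Lemma read_input T (Q : state -> Prop) :
  (forall st, Q st -> st.1.1 != [::] -> Q (stack_step T st)) ->
  forall st, Q st -> exists S O, Q ([::], S, O) /\
    forall z, run_out T (st.1.1 ++ z, st.1.2, st.2) = run_out T (z, S, O).
Proof.
move=> QS st; have [k] := ubnP (pending st); elim: k st => // k IH st.
case: st => [[[|a i] s] o] lt_k Qst; first by exists s, o.
have lt_step : pending (stack_step T (a :: i, s, o)) < k.
  by rewrite pending_step; move: lt_k; rewrite /pending /=; lia.
have [S [O [QSO readSO]]] := IH _ lt_step (QS _ Qst isT).
exists S, O; split=> // z; rewrite -readSO -stack_step_catl //.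
by rewrite run_out_step.
Qed.

Lemma subseq_stack_run_out T i s o p q :
  subseq [:: p; q] s -> subseq [:: p; q] (run_out T (i, s, o)).
Proof.
move=> pq_s.
pose Q (st : state) := [\/ subseq [:: p; q] st.1.2, p \in st.2 /\ q \in st.1.2
                          | subseq [:: p; q] st.2].
suff /(run_out_ind (T := T)) /(_ (i, s, o) (@Or31 _ _ _ pq_s)) :
    forall st, Q st -> Q (stack_step T st).
  by case=> //= [[]].
move=> st; rewrite /Q; case: stack_stepP => [a i' s' o' _|i' b s' o' _|o'] //= [pq|[p_o q_s]|pq].
- by apply: Or31; apply: subseq_trans pq (subseq_cons _ _).
- by apply: Or32; rewrite inE q_s orbT.
- exact: Or33.
- move: pq => /=; case: eqP => [-> q_s'|_ pq]; last exact: Or31.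
  by apply: Or32; rewrite mem_rcons mem_head -sub1seq q_s'.
- move: q_s; rewrite inE => /orP[/eqP ->|q_s'].
    by apply: Or33; rewrite -cats1 -cat1s cat_subseq // sub1seq.
  by apply: Or32; rewrite mem_rcons inE p_o orbT.
- by apply: Or33; apply: subseq_trans pq (subseq_rcons _ _).
Qed.

Lemma mem_subseqs s t : (t \in subseqs s) = subseq t s.
Proof.
elim: s t => [|a s IH] t /=; first by rewrite inE; case: t.
rewrite mem_cat IH; case: t => [|b t] /=; first by rewrite sub0seq orbT.
case: (eqVneq b a) => [->|ne].
  apply/orP/idP => [[/mapP[t' t's [->]]|ats]|]; first by rewrite -IH.
    exact: subseq_trans (subseq_cons t a) ats.
  by left; apply/mapP; exists t; rewrite ?IH.
by rewrite orb_idl // => /mapP[t' _ [ba _]]; rewrite ba eqxx in ne.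
Qed.

Lemma containsP s p : reflect (exists2 t, subseq t s & order_iso t p) (contains s p).
Proof.
by apply: (iffP hasP) => -[t t_s oi]; exists t; rewrite ?mem_subseqs in t_s *.
Qed.

Lemma size_order_iso t p : order_iso t p -> size t = size p.
Proof. by case/andP => /eqP. Qed.

Lemma order_iso123 p q r : order_iso [:: p; q; r] [:: 1; 2; 3] = (p < q < r).
Proof.
rewrite /order_iso /= !ltnn /=.
by case: (ltngtP p q); case: (ltngtP q r); case: (ltngtP p r) => //= *; lia.
Qed.

Lemma order_iso321 p q r : order_iso [:: p; q; r] [:: 3; 2; 1] = (r < q < p).
Proof.
rewrite /order_iso /= !ltnn /=.
by case: (ltngtP p q); case: (ltngtP q r); case: (ltngtP p r) => //= *; lia.
Qed.

Lemma order_iso21 p q : order_iso [:: p; q] [:: 2; 1] = (q < p).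
Proof. by rewrite /order_iso /= !ltnn /=; case: (ltngtP p q) => //= *; lia. Qed.

Lemma contains123P s :
  reflect (exists p q r, subseq [:: p; q; r] s /\ p < q < r) (contains s [:: 1; 2; 3]).
Proof.
apply: (iffP (containsP _ _)) => [[t t_s oi]|[p [q [r [pqr_s lt_pqr]]]]].
  case: t t_s oi (size_order_iso oi) => [|p [|q [|r []]]] // t_s oi _.
  by exists p, q, r; rewrite -order_iso123.
by exists [:: p; q; r]; rewrite ?order_iso123.
Qed.

Lemma contains321P s :
  reflect (exists p q r, subseq [:: p; q; r] s /\ r < q < p) (contains s [:: 3; 2; 1]).
Proof.
apply: (iffP (containsP _ _)) => [[t t_s oi]|[p [q [r [pqr_s lt_rqp]]]]].
  case: t t_s oi (size_order_iso oi) => [|p [|q [|r []]]] // t_s oi _.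
  by exists p, q, r; rewrite -order_iso321.
by exists [:: p; q; r]; rewrite ?order_iso321.
Qed.

Lemma contains21P s :
  reflect (exists p q, subseq [:: p; q] s /\ q < p) (contains s [:: 2; 1]).
Proof.
apply: (iffP (containsP _ _)) => [[t t_s oi]|[p [q [pq_s lt_qp]]]].
  case: t t_s oi (size_order_iso oi) => [|p [|q []]] // t_s oi _.
  by exists p, q; rewrite -order_iso21.
by exists [:: p; q]; rewrite ?order_iso21.
Qed.

Lemma contains_map (f : nat -> nat) s p :
  {mono f : a b / a < b} -> contains (map f s) p = contains s p.
Proof.
move=> f_mono; rewrite /contains.
have -> : subseqs (map f s) = map (map f) (subseqs s).
  by elim: s => [|a s IH] //=; rewrite IH map_cat -!map_comp.
rewrite has_map; apply: eq_has => t /=; rewrite /order_iso size_map.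
congr (_ && _); apply: eq_in_all => i; rewrite mem_iota => /andP[_ lt_i].
by apply: eq_in_all => j; rewrite mem_iota => /andP[_ lt_j]; rewrite !(nth_map 0) ?f_mono.
Qed.

Lemma avoids_map T (f : nat -> nat) s :
  {mono f : a b / a < b} -> avoids_all T (map f s) = avoids_all T s.
Proof. by move=> f_mono; apply: eq_all => p; rewrite contains_map. Qed.

Lemma avoids_subseq T s1 s2 : subseq s1 s2 -> avoids_all T s2 -> avoids_all T s1.
Proof.
move=> s12 /allP av2; apply/allP => p /av2; apply: contra.
by case/containsP => t t_s1 oi; apply/containsP; exists t; first exact: subseq_trans t_s1 s12.
Qed.

Definition T123_321 : seq (seq nat) := [:: [:: 1; 2; 3]; [:: 3; 2; 1]].

Definition T21 : seq (seq nat) := [:: [:: 2; 1]].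

Lemma avoids_T123_321E s :
  avoids_all T123_321 s = ~~ contains s [:: 1; 2; 3] && ~~ contains s [:: 3; 2; 1].
Proof. by rewrite /avoids_all /= andbT. Qed.

Lemma avoids_no123 s p q r :
  avoids_all T123_321 s -> subseq [:: p; q; r] s -> p < q < r -> False.
Proof.
rewrite avoids_T123_321E => /andP[/contains123P no123 _] pqr_s lt_pqr.
by apply: no123; exists p, q, r.
Qed.

Lemma avoids_no321 s p q r :
  avoids_all T123_321 s -> subseq [:: p; q; r] s -> r < q < p -> False.
Proof.
rewrite avoids_T123_321E => /andP[_ /contains321P no321] pqr_s lt_rqp.
by apply: no321; exists p, q, r.
Qed.

Lemma not_avoids_T123_321 s : ~~ avoids_all T123_321 s ->
  exists p q r, subseq [:: p; q; r] s /\ (p < q < r \/ r < q < p).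
Proof.
rewrite avoids_T123_321E negb_and !negbK.
by case/orP => [/contains123P|/contains321P] [p [q [r [pqr_s lt]]]]; exists p, q, r; split; auto.
Qed.

Lemma not_avoids_321 s p q r : subseq [:: p; q; r] s -> r < q < p -> ~~ avoids_all T123_321 s.
Proof.
move=> pqr_s lt_rqp; rewrite avoids_T123_321E negb_and !negbK.
by apply/orP; right; apply/contains321P; exists p, q, r.
Qed.

Lemma avoids_T123_321_small s : size s < 3 -> avoids_all T123_321 s.
Proof.
move=> small_s; rewrite avoids_T123_321E.
by apply/andP; split; apply/negP; [move/contains123P | move/contains321P];
  move=> -[p [q [r [/size_subseq /= ? _]]]]; lia.
Qed.

Lemma avoids_T21E s : avoids_all T21 s = ~~ contains s [:: 2; 1].
Proof. by rewrite /avoids_all /= andbT. Qed.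

Lemma not_avoids_T21 s p q : subseq [:: p; q] s -> q < p -> ~~ avoids_all T21 s.
Proof. by move=> pq_s lt_qp; rewrite avoids_T21E negbK; apply/contains21P; exists p, q. Qed.

Lemma sorted_avoids_T21 s : sorted ltn s -> avoids_all T21 s.
Proof.
move=> s_sorted; rewrite avoids_T21E; apply/contains21P => -[p [q [pq_s lt_qp]]].
by have := subseq_sorted ltn_trans pq_s s_sorted; rewrite /= andbT ltnNge ltnW.
Qed.

Definition map_state (f : nat -> nat) (st : state) : state :=
  (map f st.1.1, map f st.1.2, map f st.2).

Lemma run_out_map T (f : nat -> nat) st :
  {mono f : a b / a < b} -> run_out T (map_state f st) = map f (run_out T st).
Proof.
move=> f_mono.
have stepE st' : stack_step T (map_state f st') = map_state f (stack_step T st').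
  case: st' => [[[|a i] [|b s]] o]; rewrite /map_state /= ?map_rcons //.
    by case: ifP; case: ifP.
  rewrite -[[:: f a, f b & _]]/(map f [:: a, b & s]) avoids_map //.
  by case: ifP; rewrite //= map_rcons.
rewrite /run_out (_ : pending (map_state f st) = pending st) ?(stack_run_comm stepE) //.
by rewrite /pending /map_state /= !size_map.
Qed.

Lemma s_T_run_out T x : s_T T x = run_out T (x, [::], [::]).
Proof. by rewrite /s_T /run_out /pending addn0. Qed.

Lemma perm_s_T T x : perm_eq (s_T T x) x.
Proof. by rewrite s_T_run_out (perm_trans (perm_run_out _ _)) // /content /= cats0. Qed.

Lemma s_T_map T (f : nat -> nat) x :
  {mono f : a b / a < b} -> s_T T (map f x) = map f (s_T T x).
Proof. by move=> f_mono; rewrite !s_T_run_out -run_out_map. Qed.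

Definition pat231 (s : seq nat) := exists b c a, subseq [:: b; c; a] s /\ a < b < c.

Lemma west_s_231 y : pat231 y -> ~~ sorted ltn (west_s y).
Proof.
move=> [b [c [a [bca_y /andP[lt_ab lt_bc]]]]]; apply/negP.
(* b must leave the stack before c can be pushed above it, hence before a is read. *)
pose Q (st : state) := [\/ subseq [:: b; c; a] st.1.1,
  b \in st.1.2 /\ subseq [:: c; a] st.1.1,
  b \in st.2 /\ a \in st.1.2 ++ st.1.1 | subseq [:: b; a] st.2].
suff /(run_out_ind (T := T21)) /(_ (y, [::], [::]) (@Or41 _ _ _ _ bca_y)) :
    forall st, Q st -> Q (stack_step T21 st).
  case=> /= [|[]|[]|ba_out] //; rewrite /west_s s_T_run_out.
  by move=> /(subseq_sorted ltn_trans ba_out) /=; rewrite andbT ltnNge ltnW.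
move=> st; rewrite /Q; case: stack_stepP => [d i s o push|i d s o _|o] //=.
- case=> [|[b_s]|[b_o a_in]|ba_o]; last exact: Or44.
  + by case: eqP => [<- ca_i|_ bca_i]; [apply: Or42; rewrite mem_head | apply: Or41].
  + case: eqP => [cd _|_ ca_i]; last by apply: Or42; rewrite inE b_s orbT.
    have cb_cs : subseq [:: c; b] (c :: s) by rewrite /= eqxx sub1seq.
    move: push; rewrite -cd (negbTE (not_avoids_T21 cb_cs lt_bc)) orbF.
    by move=> /eqP s0; rewrite s0 in b_s.
  + apply: Or43; split=> //; move: a_in.
    by rewrite !(mem_cat, inE) => /or3P[] ->; rewrite ?orbT.
- case=> [bca_i|[b_ds ca_i]|[b_o a_in]|ba_o].
  + exact: Or41.
  + move: b_ds; rewrite inE => /orP[/eqP <-|b_s]; last exact: Or42.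
    have a_i : a \in i by apply: (mem_subseq ca_i); rewrite !inE eqxx orbT.
    by apply: Or43; rewrite mem_rcons mem_head mem_cat a_i orbT.
  + move: a_in; rewrite /= inE => /orP[/eqP <-|a_in].
      apply: Or44; rewrite -cats1 -[[:: b; a]]/([:: b] ++ [:: a]).
      by rewrite cat_subseq ?sub1seq ?mem_head.
    by apply: Or43; rewrite mem_rcons inE b_o orbT.
  + by apply: Or44; apply: subseq_trans ba_o (subseq_rcons _ _).
Qed.

Lemma run_out_T21_push_sorted u z s o : sorted ltn (rev u ++ s) ->
  run_out T21 (u ++ z, s, o) = run_out T21 (z, rev u ++ s, o).
Proof.
elim: u s => [|a u IH] s //=; rewrite rev_cons cat_rcons => u_s.
have a_s : sorted ltn (a :: s) := subseq_sorted ltn_trans (suffix_subseq _ _) u_s.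
by rewrite -run_out_step stack_step_push ?sorted_avoids_T21 // IH.
Qed.

Lemma west_s_min_after_decreasing u v m : sorted gtn u -> {in u ++ v, forall y, m < y} ->
  west_s (u ++ m :: v) = m :: west_s (u ++ v).
Proof.
move=> u_dec m_min; rewrite /west_s !s_T_run_out.
rewrite !run_out_T21_push_sorted ?cats0 ?rev_sorted //.
have m_rev_u : sorted ltn (m :: rev u).
  rewrite /= path_sortedE ?rev_sorted //; last exact: ltn_trans.
  rewrite u_dec andbT; apply/allP => y; rewrite mem_rev => y_u.
  by apply: m_min; rewrite mem_cat y_u.
rewrite -run_out_step stack_step_push ?sorted_avoids_T21 // -run_out_step.
rewrite (_ : stack_step T21 (v, m :: rev u, [::]) = (v, rev u, [:: m])).
  exact: (run_out_cat _ _ _ [:: m] [::]).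
case: v m_min => [|h v] m_min //; apply: stack_step_pop.
apply: (not_avoids_T21 (prefix_subseq [:: h; m] (rev u))).
by rewrite m_min // mem_cat mem_head orbT.
Qed.

Definition ascent (s : seq nat) := exists p q, subseq [:: p; q] s /\ p < q.

Lemma not_sorted_gtn_ascent s : uniq s -> ~~ sorted gtn s -> ascent s.
Proof.
move=> s_uniq; rewrite sorted_pairwise; last by move=> ? ? ? /=; lia.
elim: s s_uniq => [|a s IH] //= /andP[a_s s_uniq]; rewrite negb_and.
case/orP => [/allPn[y y_s]|/(IH s_uniq)[p [q [pq lt_pq]]]]; last first.
  by exists p, q; split=> //; apply: subseq_trans pq (subseq_cons _ _).
have /negPf ne_ay : a != y by apply: contraNneq a_s => ->.
by rewrite /= -leqNgt leq_eqVlt ne_ay => lt_ay; exists a, y; rewrite /= eqxx sub1seq.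
Qed.

Lemma avoids_stack_step T st : (forall a, avoids_all T [:: a]) ->
  avoids_all T st.1.2 -> avoids_all T (stack_step T st).1.2.
Proof.
move=> av1; case: stack_stepP => [a i s o|i b s o _|o] //=.
  by case/orP => [/eqP -> _|av _] //; exact: av1.
exact/avoids_subseq/subseq_cons.
Qed.

Lemma ascent_of_blocked_min m s : avoids_all T123_321 s -> {in s, forall y, m < y} ->
  ~~ avoids_all T123_321 (m :: s) -> ascent s.
Proof.
move=> av_s m_min /not_avoids_T123_321 [p [q [r [/= pqr lt]]]].
move: pqr lt; case: eqP => [-> qr_s lt|_ pqr_s lt]; last first.
  by exfalso; case: lt; [apply: avoids_no123 av_s pqr_s | apply: avoids_no321 av_s pqr_s].
case: lt => lt; first by exists q, r; split=> //; lia.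
have := m_min q (mem_subseq qr_s (mem_head _ _)); lia.
Qed.

Lemma run_out_push_min S O m : avoids_all T123_321 S -> {in S, forall y, m < y} ->
  exists P S2, [/\ S = P ++ S2, run_out T123_321 ([:: m], S, O) = O ++ P ++ m :: S2
                 & forall j, j < size P -> ascent (drop j S)].
Proof.
have push_m O' s : avoids_all T123_321 (m :: s) ->
    run_out T123_321 ([:: m], s, O') = O' ++ m :: s.
  by move=> av; rewrite -run_out_step stack_step_push // run_out_flush.
elim: S O => [|b S IH] O av_S m_min.
  by exists [::], [::]; rewrite push_m ?avoids_T123_321_small.
have [av|blocked] := boolP (avoids_all T123_321 [:: m, b & S]).
  by exists [::], (b :: S); rewrite push_m.
have m_minS : {in S, forall y, m < y} by move=> y y_S; rewrite m_min // inE y_S orbT.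
have [P [S2 [ES run_S asc]]] := IH (rcons O b) (avoids_subseq (subseq_cons _ _) av_S) m_minS.
exists (b :: P), S2; split; first by rewrite ES.
  by rewrite -run_out_step stack_step_pop // run_S cat_rcons.
case=> [_|j]; last exact: asc.
by apply: ascent_of_blocked_min blocked; rewrite ?drop0.
Qed.

Lemma min_ends_popped_prefix m P S2 :
  avoids_all T123_321 (P ++ S2) -> uniq (P ++ S2) -> {in P ++ S2, forall y, m <= y} ->
  (forall j, j < size P -> ascent (drop j (P ++ S2))) -> m \in P ++ S2 ->
  exists w v, P ++ S2 = w ++ m :: v /\ subseq P (rcons w m).
Proof.
move=> av uq m_min asc; rewrite mem_cat => /orP[m_P|/splitPr[S21 S22]]; last first.
  by exists (P ++ S21), S22; rewrite catA rcons_cat prefix_subseq.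
case/splitPr: m_P av uq m_min asc => P1 [|p P2] av uq m_min asc.
  by exists P1, S2; rewrite -catA cats1.
(* p was popped because of an ascent below it, which would follow m in S. *)
have [q [r [qr lt_qr]]] : ascent (p :: P2 ++ S2).
  have lt_j : (size P1).+1 < size (P1 ++ [:: m, p & P2]) by rewrite size_cat /=; lia.
  by move: (asc _ lt_j); rewrite -catA /= -cat_rcons drop_size_cat ?size_rcons.
move: uq; rewrite -catA /= => /(subseq_uniq (suffix_subseq _ _)) /= /andP[m_notin _].
have lt_mq : m < q.
  have q_in : q \in p :: P2 ++ S2 := mem_subseq qr (mem_head _ _).
  rewrite ltn_neqAle m_min; last by rewrite -catA mem_cat /= inE q_in !orbT.
  by rewrite andbT; apply: contraNneq m_notin => ->.
exfalso; apply: (avoids_no123 av (p := m) (q := q) (r := r)); last by rewrite lt_mq.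
by rewrite -catA; apply: subseq_trans (suffix_subseq P1 _); rewrite /= eqxx.
Qed.

Lemma pat231_ascent_before_min w m v b c : uniq (w ++ m :: v) -> {in w, forall y, m <= y} ->
  subseq [:: b; c] (rcons w m) -> b < c -> pat231 (w ++ m :: v).
Proof.
move=> uq m_min bc lt_bc.
have m_w : m \notin w by move: uq; rewrite uniq_catC /= mem_cat negb_or => /andP[/andP[]].
have bc_w : subseq [:: b; c] w.
  move: bc; rewrite -subseq_rev rev_rcons (_ : rev [:: b; c] = [:: c; b]) //=.
  case: eqP => [cm|_]; last by rewrite -subseq_rev revK; apply.
  by rewrite sub1seq mem_rev => /m_min; lia.
have b_w : b \in w := mem_subseq bc_w (mem_head _ _).
exists b, c, m; split.
  by rewrite -[[:: b; c; m]]/([:: b; c] ++ [:: m]) cat_subseq // sub1seq mem_head.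
rewrite lt_bc andbT ltn_neqAle m_min // andbT.
by apply: contraNneq m_w => ->.
Qed.

Lemma stack_above_min_shape m B : avoids_all T123_321 (m :: B) ->
  {in B, forall y, m < y} -> uniq B -> sorted gtn B /\ size B <= 2.
Proof.
move=> av m_min uB.
have B_dec : sorted gtn B.
  apply: contraT => /(not_sorted_gtn_ascent uB) [p [q [pq lt_pq]]]; exfalso.
  have lt_mp := m_min p (mem_subseq pq (mem_head _ _)).
  by apply: (avoids_no123 av (p := m) (q := p) (r := q)); rewrite ?lt_mp //= eqxx.
split=> //; case: B av m_min uB B_dec => [|d1 [|d2 [|d3 B]]] // av _ _ /and3P[/= lt12 lt23 _].
exfalso; apply: (avoids_no321 av (p := d1) (q := d2) (r := d3)); last by rewrite /= lt12 lt23.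
exact: subseq_trans (prefix_subseq [:: d1; d2; d3] B) (subseq_cons _ _).
Qed.

Lemma blocked_min_231 h i m B o :
  avoids_all T123_321 (m :: B) -> ~~ avoids_all T123_321 [:: h, m & B] ->
  m < h -> {in B, forall y, m < y} -> uniq B ->
  pat231 (run_out T123_321 (h :: i, m :: B, o)).
Proof.
move=> av_mB blocked lt_mh m_min uB.
have [_ size_B] := stack_above_min_shape av_mB m_min uB.
have [q [r [EB /andP[lt_rq lt_qh]]]] : exists q r, B = [:: q; r] /\ r < q < h.
  case/not_avoids_T123_321: (blocked) => p [q [r [/= pqr lt]]].
  move: pqr lt; case: eqP => [-> |_ pqr lt]; last first.
    by exfalso; case: lt; [apply: avoids_no123 av_mB pqr | apply: avoids_no321 av_mB pqr].
  case: eqP => [-> /[!sub1seq] /m_min|_ qr_B]; first lia.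
  have lt_mq := m_min q (mem_subseq qr_B (mem_head _ _)).
  case=> lt; last by exists q, r; split=> //; apply/esym/eqP;
    rewrite -(size_subseq_leqif qr_B).2 eqn_leq size_B (size_subseq qr_B).
  by exfalso; apply: (avoids_no123 av_mB (p := m) (q := q) (r := r)); rewrite /= ?eqxx //; lia.
rewrite EB in blocked *.
have hqr_321 : ~~ avoids_all T123_321 [:: h; q; r].
  by apply: not_avoids_321 => //; rewrite lt_rq lt_qh.
(* m is popped, then q, and h is pushed above r: the output reads q, then h, then r. *)
rewrite -run_out_step stack_step_pop // -run_out_step stack_step_pop //.
rewrite -run_out_step stack_step_push ?avoids_T123_321_small //.
rewrite -[rcons (rcons o m) q]cats0 run_out_cat.
exists q, h, r; split; last by rewrite lt_rq lt_qh.
by rewrite -cat1s cat_subseq ?subseq_stack_run_out // sub1seq mem_rcons mem_head.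
Qed.

Lemma read_min_stays_or_231 xt : uniq xt ->
  exists S O, [/\ perm_eq (O ++ S) xt, avoids_all T123_321 S,
    forall z, run_out T123_321 (xt ++ z, [::], [::]) = run_out T123_321 (z, S, O) &
    forall m, m \in xt -> {in xt, forall y, m <= y} -> m \in S \/ pat231 (O ++ S)].
Proof.
move=> xt_uniq.
pose Q (st : state) := [/\ perm_eq (content st) xt, avoids_all T123_321 st.1.2 &
  forall m, m \in xt -> {in xt, forall y, m <= y} ->
    [\/ m \in st.1.1, m \in st.1.2 | pat231 (run_out T123_321 st)]].
have Q_step st : Q st -> st.1.1 != [::] -> Q (stack_step T123_321 st).
  case=> perm_st av_st min_st input_st; split.
  - exact: perm_trans (perm_content_step _ _) perm_st.
  - by apply: avoids_stack_step => // a; apply: avoids_T123_321_small.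
  move=> m m_xt m_min; rewrite run_out_step.
  move: (min_st m m_xt m_min) perm_st av_st input_st.
  case: stack_stepP => [a i s o _|i b s o blocked|o] //=.
    case=> [|m_s|pat _ _ _]; last exact: Or33.
      by rewrite inE => /orP[/eqP -> |m_i] _ _ _; [apply: Or32; rewrite mem_head | exact: Or31].
    by move=> _ _ _; apply: Or32; rewrite inE m_s orbT.
  case=> [m_i|m_bs|pat] perm_st av_bs input_st; [exact: Or31| |exact: Or33].
  move: m_bs; rewrite inE => /orP[/eqP mb|m_s]; last exact: Or32.
  apply: Or33; rewrite -{}mb in blocked perm_st av_bs *.
  case: i input_st blocked perm_st => [|h i] // _ blocked perm_st.
  have /(subseq_uniq (suffix_subseq o _)) /= /andP[m_notin rest_uniq] :
    uniq (o ++ m :: s ++ h :: i) by rewrite (perm_uniq perm_st).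
  have m_lt y : y \in s ++ h :: i -> m < y.
    move=> y_in; rewrite ltn_neqAle m_min ?andbT; last first.
      by rewrite -(perm_mem perm_st) /content /= mem_cat inE y_in !orbT.
    by apply: contraNneq m_notin => ->.
  apply: blocked_min_231 => //; first by rewrite m_lt // mem_cat mem_head orbT.
    by move=> y y_s; rewrite m_lt // mem_cat y_s.
  by move: rest_uniq; rewrite cat_uniq => /andP[].
have [|S [O [[perm_OS av_S min_SO] read_SO]]] := read_input Q_step (st := (xt, [::], [::])).
  by split=> // m m_xt _; apply: Or31.
exists S, O; split=> //; first by rewrite /content /= cats0 in perm_OS.
move=> m m_xt m_min; case: (min_SO m m_xt m_min) => [//|m_S|]; first by left.
by rewrite run_out_flush; right.
Qed.

Lemma popped_ascent_231 O P S2 b c :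
  uniq (O ++ P ++ S2) -> avoids_all T123_321 (P ++ S2) ->
  (forall j, j < size P -> ascent (drop j (P ++ S2))) ->
  (forall m, m \in O ++ P ++ S2 -> {in O ++ P ++ S2, forall y, m <= y} ->
     m \in P ++ S2 \/ pat231 (O ++ P ++ S2)) ->
  subseq [:: b; c] (O ++ P) -> b < c -> pat231 (O ++ P ++ S2).
Proof.
move=> W_uniq av asc min_W bc lt_bc.
have b_W : b \in O ++ P ++ S2 by rewrite catA mem_cat (mem_subseq bc) ?mem_head.
case: (ex_minnP (ex_intro (fun y => y \in O ++ P ++ S2) b b_W)) => m m_W m_min.
case: (min_W m m_W m_min) => // m_S.
have [w [v [Ewv Pw]]] : exists w v, P ++ S2 = w ++ m :: v /\ subseq P (rcons w m).
  apply: min_ends_popped_prefix => //.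
  - by move: W_uniq; rewrite cat_uniq => /and3P[].
  - by move=> y y_S; apply: m_min; rewrite mem_cat y_S orbT.
rewrite Ewv catA; apply: (pat231_ascent_before_min (b := b) (c := c)) => //.
- by rewrite -catA -Ewv.
- by move=> y y_Ow; apply: m_min; rewrite Ewv catA mem_cat y_Ow.
- by apply: subseq_trans bc _; rewrite rcons_cat cat_subseq ?subseq_refl.
Qed.

Lemma sorted_west_rcons_min xt m0 : uniq xt -> {in xt, forall y, m0 < y} ->
  sorted ltn (west_s (s_pair [:: 1; 2; 3] [:: 3; 2; 1] (rcons xt m0))) =
  sorted ltn (west_s (s_pair [:: 1; 2; 3] [:: 3; 2; 1] xt)).
Proof.
move=> xt_uniq m0_lt.
have [S [O [perm_OS av_S read_SO min_SO]]] := read_min_stays_or_231 xt_uniq.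
have S_xt : {subset S <= xt} by move=> y y_S; rewrite -(perm_mem perm_OS) mem_cat y_S orbT.
have [P [S2 [ES push_SO asc]]] := run_out_push_min O av_S (fun y y_S => m0_lt y (S_xt y y_S)).
rewrite /s_pair !s_T_run_out -cats1 read_SO push_SO -[xt]cats0 read_SO run_out_flush.
rewrite ES in perm_OS av_S asc min_SO *.
have W_xt : O ++ P ++ S2 =i xt := perm_mem perm_OS.
have [u_dec|/not_sorted_gtn_ascent[|b [c [bc lt_bc]]]] := boolP (sorted gtn (O ++ P)).
- rewrite !catA west_s_min_after_decreasing //; last by move=> y; rewrite -catA W_xt => /m0_lt.
  rewrite /= path_sortedE; last exact: ltn_trans.
  rewrite (eq_all_r (perm_mem (perm_s_T _ _))) andb_idl // => _.
  by apply/allP => y; rewrite -catA W_xt => /m0_lt.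
- by move: (perm_uniq perm_OS); rewrite xt_uniq catA cat_uniq => /andP[].
have b_xt : b \in xt by rewrite -W_xt catA mem_cat (mem_subseq bc) ?mem_head.
rewrite !catA (negbTE (west_s_231 _)); last first.
  exists b, c, m0; rewrite lt_bc m0_lt //; split=> //.
  by rewrite -[[:: b; c; m0]]/([:: b; c] ++ [:: m0]) cat_subseq // sub1seq mem_head.
apply/esym/negbTE/west_s_231; rewrite -catA; apply: popped_ascent_231 bc lt_bc => //.
  by rewrite (perm_uniq perm_OS).
move=> m; rewrite W_xt => m_xt m_min; apply: min_SO => // y y_xt.
by apply: m_min; rewrite W_xt.
Qed.

Lemma perm_iota_eq_sorted s a n : perm_eq s (iota a n) -> (s == iota a n) = sorted ltn s.
Proof.
move=> s_perm; apply/eqP/idP => [->|s_sorted]; first exact: iota_ltn_sorted.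
exact: (irr_sorted_eq ltn_trans ltnn s_sorted (iota_ltn_sorted a n) (perm_mem s_perm)).
Qed.

Lemma in_SortE n x : is_perm n x ->
  in_Sort n [:: 1; 2; 3] [:: 3; 2; 1] x =
  sorted ltn (west_s (s_pair [:: 1; 2; 3] [:: 3; 2; 1] x)).
Proof.
move=> x_perm; rewrite /in_Sort x_perm perm_iota_eq_sorted //.
exact: perm_trans (perm_s_T _ _) (perm_trans (perm_s_T _ _) x_perm).
Qed.

Lemma is_perm_inc n x : is_perm n x -> is_perm n.+1 (inc x).
Proof.
rewrite /is_perm /inc perm_rcons /= perm_cons -[2]/(1 + 1) iotaDl => x_perm.
exact: perm_map.
Qed.

Theorem proposition4p7 (n : nat) (x : seq nat) :
  5 <= n -> is_perm n x ->
  (in_Sort n [:: 1; 2; 3] [:: 3; 2; 1] x <->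
   in_Sort n.+1 [:: 1; 2; 3] [:: 3; 2; 1] (inc x)).
Proof.
move=> _ x_perm.
have xs_uniq : uniq (map succn x).
  by rewrite (map_inj_uniq succn_inj) (perm_uniq x_perm) iota_uniq.
have xs_gt1 : {in map succn x, forall y, 1 < y}
  by move=> _ /mapP[y + ->]; rewrite (perm_mem x_perm) mem_iota => /andP[].
rewrite (in_SortE x_perm) (in_SortE (is_perm_inc x_perm)) /inc sorted_west_rcons_min //.
by rewrite /s_pair /west_s !s_T_map // (mono_sorted (e := ltn)).
Qed.
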